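(* For $\phi_1,\phi_2\in D=\{z\in\mathbb{C};|z|<1\}$ with $\phi_1\ne-\phi_2$, define $$s(\phi_1,\phi_2)=\frac{|1-\phi_1\overline{\phi_2}|^2}{(1-|\phi_1\overline{\phi_2}|^2)^3}\rho^{-2}(1-\rho)^{-3/2}\operatorname{Im}(\phi_1\overline{\phi_2})(|\phi_1|^2-|\phi_2|^2)(1-|\phi_1|^2)(1-|\phi_2|^2),$$ with $\rho=|(1-|\phi_2|^2)\phi_1+(1-|\phi_1|^2)\phi_2|/(1-|\phi_1\overline{\phi_2}|^2)$; this is the skewness of the distribution on the unit circle $\partial D$ with density (w.r.t. arc length) $$f(z)=\frac{1}{2\pi}\frac{|1-\phi_1\overline{\phi_2}|^2}{1-|\phi_1\overline{\phi_2}|^2}\frac{1-|\phi_1|^2}{|z-\phi_1|^2}\frac{1-|\phi_2|^2}{|z-\phi_2|^2}.$$ Then, whenever the quantities involved are defined: (1) $s(\phi_1,\phi_2)=0$ if and only if the density $f$ is symmetric; (2) $s(\phi_1,\phi_2)>0$ ($<0$) if and only if $\operatorname{Im}(\phi_1\overline{\phi_2})(|\phi_1|-|\phi_2|)>0$ ($<0$); (3) for $\phi_1,\phi_2\ne0$, $s(\phi_1,\phi_2)=-s(\phi_1,\overline{\phi_2}\phi_1^2/|\phi_1|^2)=-s(\overline{\phi_1}\phi_2^2/|\phi_2|^2,\phi_2)$; (4) $s(\phi_2,\phi_1)=s(\phi_1,\phi_2)$; (5) $s(\overline{\phi_1},\overline{\phi_2})=-s(\phi_1,\phi_2)$; (6)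 $s(\alpha\phi_1,\alpha\phi_2)=s(\phi_1,\phi_2)$ for all $\alpha\in\partial D$; (7) if $\rho_1,\rho_2>0$ and $\sin(\mu_1-\mu_2)>0$ ($<0$), then $\lim_{\rho_1\to1}s(\rho_1\mathrm{e}^{\mathrm{i}\mu_1},\rho_2\mathrm{e}^{\mathrm{i}\mu_2})=\infty$ ($-\infty$).
   Context: For a random variable $Z$ on the unit circle with $E(Z)\neq0$, the skewness is $E[\operatorname{Im}\{(Z\mathrm{e}^{-\mathrm{i}\zeta})^2\}]/(1-\delta)^{3/2}$ with $\zeta=\arg E(Z)$ and $\delta=|E(Z)|$. *)

From Stdlib Require Import Reals.
From Coquelicot Require Import Coquelicot.
Open Scope R_scope.

Definition in_D (z : C) : Prop := Cmod z < 1.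

Definition polar (r mu : R) : C := (r * cos mu, r * sin mu).

Definition rho_s (p1 p2 : C) : R :=
  Cmod (Cplus (Cmult (RtoC (1 - (Cmod p2)^2)) p1)
              (Cmult (RtoC (1 - (Cmod p1)^2)) p2))
  / (1 - (Cmod (Cmult p1 (Cconj p2)))^2).

Definition skew_s (p1 p2 : C) : R :=
  let a := Cmult p1 (Cconj p2) in
  let rho := rho_s p1 p2 in
  (Cmod (Cminus (RtoC 1) a))^2 / (1 - (Cmod a)^2)^3
  * / rho^2 * Rpower (1 - rho) (-3/2)
  * Im a * ((Cmod p1)^2 - (Cmod p2)^2)
  * (1 - (Cmod p1)^2) * (1 - (Cmod p2)^2).

Definition dens_f (p1 p2 z : C) : R :=
  let a := Cmult p1 (Cconj p2) in
  / (2 * PI) * ((Cmod (Cminus (RtoC 1) a))^2 / (1 - (Cmod a)^2))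
  * ((1 - (Cmod p1)^2) / (Cmod (Cminus z p1))^2)
  * ((1 - (Cmod p2)^2) / (Cmod (Cminus z p2))^2).

(* a density g on the unit circle is symmetric: invariant under the
   reflection z |-> alpha * conj z (alpha on the unit circle) across some
   line through the origin *)
Definition symmetric_density (g : C -> R) : Prop :=
  exists alpha : C, Cmod alpha = 1 /\
    forall z : C, Cmod z = 1 -> g (Cmult alpha (Cconj z)) = g z.

From Stdlib Require Import Reals Lra Psatz.
From Coquelicot Require Import Coquelicot.
Open Scope R_scope.

(* Put a = phi1 conj(phi2).  The skewness depends on (phi1, phi2) only through a,
   |phi1|, |phi2| and the modulus of the numerator of rho, and it changes sign when a
   is conjugated or when |phi1| and |phi2| are exchanged; (3)-(6) are transformations
   acting on these data in this way.  All remaining factors are positive when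
   rho <> 0, and rho = 0 forces Im a = 0, so s = P Im a (|phi1| - |phi2|) with P > 0.
   For (1), a reflection z |-> alpha conj z of the circle preserving f preserves the
   Fourier coefficients of |z - phi1|^2 |z - phi2|^2, so it fixes their first moment
   u and v = phi1 phi2 in the appropriate sense; then u^2 conj v is real, and
   Im (u^2 conj v) is Im a (|phi1| - |phi2|) times a factor vanishing only at
   phi1 = phi2 = 0.  Conversely, such a reflection is explicit when Im a = 0 or
   |phi1| = |phi2|.  For (7), 1 - rho = O(1 - rho1) as rho1 -> 1, so the factor
   (1 - rho)^(-3/2) beats the vanishing factor 1 - rho1^2. *)

Lemma Cmod_sqr (z : C) : Cmod z ^ 2 = fst z ^ 2 + snd z ^ 2.
Proof. unfold Cmod. rewrite pow2_sqrt; [reflexivity | nra]. Qed.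

Lemma Cmod_mul_conj (p q : C) : Cmod (p * Cconj q)%C = Cmod p * Cmod q.
Proof. rewrite Cmod_mult, Cmod_conj. reflexivity. Qed.

Lemma Cconj_RtoC (x : R) : Cconj (RtoC x) = RtoC x.
Proof. unfold Cconj, RtoC; simpl. f_equal; ring. Qed.

Lemma Cmul_conj_unit (al : C) : Cmod al = 1 -> (al * Cconj al)%C = RtoC 1.
Proof. intro H. rewrite <- Cmod2_conj, H. f_equal; ring. Qed.

Lemma Cconj_Im0 (z : C) : Im z = 0 -> Cconj z = z.
Proof. destruct z as [x y]; simpl; intro H. unfold Cconj; simpl; f_equal; lra. Qed.

Lemma Cconj_neq0 (p : C) : p <> RtoC 0 -> Cconj p <> RtoC 0.
Proof. rewrite !Cmod_gt_0, Cmod_conj. auto. Qed.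

Lemma in_D_Cmod p : in_D p -> 0 <= Cmod p < 1.
Proof. intro H. split; [apply Cmod_ge_0 | exact H]. Qed.

Lemma Im_mul_conj_self p : Im (p * Cconj p)%C = 0.
Proof. rewrite <- Cmod2_conj. apply im_RtoC. Qed.

Lemma Cmod_one_sub_ge (a : C) : 1 - Cmod a <= Cmod (Cminus (RtoC 1) a).
Proof.
  pose proof (Cmod_triangle (Cminus (RtoC 1) a) a) as T.
  replace (Cplus (Cminus (RtoC 1) a) a) with (RtoC 1) in T by ring.
  rewrite Cmod_1 in T. lra.
Qed.

Definition rho_num (p1 p2 : C) : C :=
  Cplus (Cmult (RtoC (1 - (Cmod p2)^2)) p1) (Cmult (RtoC (1 - (Cmod p1)^2)) p2).

Definition skew_form (a : C) (m1 m2 n : R) : R :=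
  let rho := n / (1 - (Cmod a)^2) in
  (Cmod (Cminus (RtoC 1) a))^2 / (1 - (Cmod a)^2)^3
  * / rho^2 * Rpower (1 - rho) (-3/2)
  * Im a * (m1^2 - m2^2) * (1 - m1^2) * (1 - m2^2).

Lemma skew_s_form p1 p2 :
  skew_s p1 p2 = skew_form (p1 * Cconj p2)%C (Cmod p1) (Cmod p2) (Cmod (rho_num p1 p2)).
Proof. reflexivity. Qed.

Lemma skew_form_conj a m1 m2 n : skew_form (Cconj a) m1 m2 n = - skew_form a m1 m2 n.
Proof.
  unfold skew_form. rewrite Cmod_conj, im_conj.
  replace (Cminus (RtoC 1) (Cconj a)) with (Cconj (Cminus (RtoC 1) a))
    by (rewrite Cminus_conj, Cconj_RtoC; reflexivity).
  rewrite Cmod_conj. ring.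
Qed.

Lemma skew_form_swap a m1 m2 n : skew_form a m2 m1 n = - skew_form a m1 m2 n.
Proof. unfold skew_form. ring. Qed.

Lemma skew_s_swap p1 p2 : skew_s p2 p1 = skew_s p1 p2.
Proof.
  rewrite !skew_s_form.
  replace (p2 * Cconj p1)%C with (Cconj (p1 * Cconj p2)) by (rewrite Cmult_conj, Cconj_conj; ring).
  replace (rho_num p2 p1) with (rho_num p1 p2) by (apply Cplus_comm).
  rewrite skew_form_conj, skew_form_swap. ring.
Qed.

Lemma skew_s_conj p1 p2 : skew_s (Cconj p1) (Cconj p2) = - skew_s p1 p2.
Proof.
  rewrite !skew_s_form, !Cmod_conj, <- skew_form_conj, <- Cmult_conj.
  replace (rho_num (Cconj p1) (Cconj p2)) with (Cconj (rho_num p1 p2)).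
  - rewrite Cmod_conj. reflexivity.
  - unfold rho_num. rewrite Cplus_conj, !Cmult_conj, !Cconj_RtoC, !Cmod_conj. reflexivity.
Qed.

Lemma skew_s_rotate p1 p2 al : Cmod al = 1 ->
  skew_s (al * p1)%C (al * p2)%C = skew_s p1 p2.
Proof.
  intro Hal. rewrite !skew_s_form, !Cmod_mult, Hal, !Rmult_1_l.
  replace ((al * p1) * Cconj (al * p2))%C with ((al * Cconj al) * (p1 * Cconj p2))%C
    by (rewrite Cmult_conj; ring).
  rewrite Cmul_conj_unit, Cmult_1_l by exact Hal.
  replace (rho_num (al * p1) (al * p2)) with (al * rho_num p1 p2)%C.
  - rewrite Cmod_mult, Hal, Rmult_1_l. reflexivity.
  - unfold rho_num. rewrite !Cmod_mult, Hal, !Rmult_1_l. ring.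
Qed.

Lemma skew_s_reflect p1 p2 ze : Cmod ze = 1 ->
  skew_s (ze * Cconj p1)%C (ze * Cconj p2)%C = - skew_s p1 p2.
Proof. intro H. rewrite skew_s_rotate by exact H. apply skew_s_conj. Qed.

Lemma skew_s_reflect_across p1 p2 : p1 <> RtoC 0 ->
  skew_s p1 (Cconj p2 * (p1 * p1) * RtoC (/ Cmod p1 ^ 2))%C = - skew_s p1 p2.
Proof.
  intro Hp. pose proof (Cconj_neq0 _ Hp) as Hc.
  assert (Hm : 0 < Cmod p1) by (apply Cmod_gt_0, Hp).
  set (ze := (p1 * p1 * RtoC (/ Cmod p1 ^ 2))%C).
  assert (Hze : Cmod ze = 1).
  { unfold ze. rewrite !Cmod_mult, Cmod_R, Rabs_pos_eq.
    - field. lra.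
    - left. apply Rinv_0_lt_compat, pow_lt, Hm. }
  assert (Hfix : (ze * Cconj p1)%C = p1).
  { unfold ze. rewrite RtoC_inv, Cmod2_conj by (apply Rgt_not_eq, pow_lt, Hm).
    field. split; assumption. }
  replace (Cconj p2 * (p1 * p1) * RtoC (/ Cmod p1 ^ 2))%C with (ze * Cconj p2)%C
    by (unfold ze; ring).
  rewrite <- (skew_s_reflect p1 p2 ze Hze), Hfix. reflexivity.
Qed.

Lemma rho_s_eq p1 p2 :
  rho_s p1 p2 = Cmod (rho_num p1 p2) / (1 - (Cmod p1 * Cmod p2) ^ 2).
Proof. unfold rho_s. rewrite Cmod_mul_conj. reflexivity. Qed.

Lemma Im_rho_num_mul_conj p1 p2 :
  Im (rho_num p1 p2 * Cconj p2)%C = (1 - Cmod p2 ^ 2) * Im (p1 * Cconj p2)%C.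
Proof.
  unfold rho_num. rewrite Cmult_plus_distr_r, im_plus, <- !Cmult_assoc, !im_scal_l.
  rewrite Im_mul_conj_self. ring.
Qed.

Lemma Im_mul_conj_of_rho_s_eq0 p1 p2 : in_D p1 -> in_D p2 ->
  rho_s p1 p2 = 0 -> Im (p1 * Cconj p2)%C = 0.
Proof.
  intros H1 H2 Hr. destruct (in_D_Cmod _ H1), (in_D_Cmod _ H2).
  assert (Hm : 0 <= Cmod p1 * Cmod p2 < 1) by (split; nra).
  assert (Hd : 0 < 1 - (Cmod p1 * Cmod p2) ^ 2) by nra.
  assert (Hn : rho_num p1 p2 = RtoC 0).
  { apply Cmod_eq_0.
    replace (Cmod (rho_num p1 p2)) with (rho_s p1 p2 * (1 - (Cmod p1 * Cmod p2) ^ 2))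
      by (rewrite rho_s_eq; field; lra).
    rewrite Hr. ring. }
  pose proof (Im_rho_num_mul_conj p1 p2) as E.
  rewrite Hn, Cmult_0_l, im_RtoC in E.
  assert (0 < 1 - Cmod p2 ^ 2) by nra. nra.
Qed.

Lemma skew_s_sign_factor p1 p2 : in_D p1 -> in_D p2 ->
  exists P, 0 < P /\
    skew_s p1 p2 = P * (Im (p1 * Cconj p2)%C * (Cmod p1 - Cmod p2)).
Proof.
  intros H1 H2. destruct (in_D_Cmod _ H1), (in_D_Cmod _ H2).
  set (rho := rho_s p1 p2).
  set (Q := Cmod (Cminus (RtoC 1) (p1 * Cconj p2)) ^ 2 / (1 - Cmod (p1 * Cconj p2) ^ 2) ^ 3
            * / rho ^ 2 * Rpower (1 - rho) (-3/2) * (1 - Cmod p1 ^ 2) * (1 - Cmod p2 ^ 2)).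
  assert (Hs : skew_s p1 p2
               = Q * (Cmod p1 + Cmod p2) * (Im (p1 * Cconj p2) * (Cmod p1 - Cmod p2))).
  { rewrite skew_s_form. unfold skew_form, Q, rho, rho_s, rho_num. ring. }
  assert (HX : Im (p1 * Cconj p2) * (Cmod p1 - Cmod p2) = 0 \/ 0 < Q * (Cmod p1 + Cmod p2)).
  { destruct (Req_dec rho 0) as [Hr | Hr].
    { left. rewrite (Im_mul_conj_of_rho_s_eq0 _ _ H1 H2 Hr). ring. }
    destruct (Req_dec (Cmod p1 + Cmod p2) 0) as [Hm | Hm].
    { left. replace (Cmod p1) with 0 by lra. replace (Cmod p2) with 0 by lra. ring. }
    right.
    assert (Ha : Cmod (p1 * Cconj p2) < 1) by (rewrite Cmod_mul_conj; nra).
    assert (0 < Cmod (Cminus (RtoC 1) (p1 * Cconj p2))).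
    { pose proof (Cmod_one_sub_ge (p1 * Cconj p2)). lra. }
    assert (0 < Rpower (1 - rho) (-3/2)) by apply exp_pos.
    assert (0 < / rho ^ 2) by (apply Rinv_0_lt_compat; nra).
    assert (0 < / (1 - Cmod (p1 * Cconj p2) ^ 2) ^ 3).
    { apply Rinv_0_lt_compat, pow_lt. pose proof (Cmod_ge_0 (p1 * Cconj p2)). nra. }
    assert (0 < Q) by (unfold Q, Rdiv; repeat apply Rmult_lt_0_compat; nra).
    apply Rmult_lt_0_compat; lra. }
  destruct HX as [HX | HX].
  - exists 1. split; [lra |]. rewrite Hs, HX. ring.
  - exists (Q * (Cmod p1 + Cmod p2)). split; [exact HX | exact Hs].
Qed.

Lemma Cmod_reflect_sub (al z p : C) : Cmod al = 1 ->
  Cmod (al * Cconj z - p)%C = Cmod (z - al * Cconj p)%C.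
Proof.
  intro Hal.
  replace (al * Cconj z - p)%C with (al * Cconj (z - al * Cconj p))%C.
  - rewrite Cmod_mult, Cmod_conj, Hal. ring.
  - rewrite Cminus_conj, Cmult_conj, Cconj_conj.
    replace (al * (Cconj z - Cconj al * p))%C with (al * Cconj z - (al * Cconj al) * p)%C by ring.
    rewrite Cmul_conj_unit by exact Hal. ring.
Qed.

Lemma Cmod_sub_pos z q : Cmod z = 1 -> Cmod q < 1 -> 0 < Cmod (z - q)%C.
Proof.
  intros Hz Hq. pose proof (Cmod_triangle (z - q) q) as T.
  replace (z - q + q)%C with z in T by ring. lra.
Qed.

Lemma scaled_inv_prod_inj k a1 a2 A B C D :
  0 < k -> 0 < a1 -> 0 < a2 -> 0 < A -> 0 < B -> 0 < C -> 0 < D ->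
  k * (a1 / A) * (a2 / B) = k * (a1 / C) * (a2 / D) -> A * B = C * D.
Proof.
  intros. assert (0 < k * a1 * a2) by (repeat apply Rmult_lt_0_compat; auto).
  assert (E : / (A * B) = / (C * D)).
  { apply (Rmult_eq_reg_l (k * a1 * a2)); [| lra].
    replace (k * a1 * a2 * / (A * B)) with (k * (a1 / A) * (a2 / B)) by (field; lra).
    replace (k * a1 * a2 * / (C * D)) with (k * (a1 / C) * (a2 / D)) by (field; lra).
    assumption. }
  rewrite <- (Rinv_inv (A * B)), E, Rinv_inv. reflexivity.
Qed.

Lemma symmetric_density_reflection p1 p2 : in_D p1 -> in_D p2 ->
  symmetric_density (dens_f p1 p2) ->
  exists al, Cmod al = 1 /\ forall z, Cmod z = 1 ->
    Cmod (z - al * Cconj p1)%C ^ 2 * Cmod (z - al * Cconj p2)%C ^ 2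
    = Cmod (z - p1)%C ^ 2 * Cmod (z - p2)%C ^ 2.
Proof.
  intros H1 H2 [al [Hal Hsym]]. exists al. split; [exact Hal |]. intros z Hz.
  destruct (in_D_Cmod _ H1), (in_D_Cmod _ H2).
  assert (Hq1 : Cmod (al * Cconj p1)%C < 1) by (rewrite Cmod_mult, Cmod_conj, Hal; lra).
  assert (Hq2 : Cmod (al * Cconj p2)%C < 1) by (rewrite Cmod_mult, Cmod_conj, Hal; lra).
  assert (Ha : Cmod (p1 * Cconj p2) < 1) by (rewrite Cmod_mul_conj; nra).
  assert (0 < Cmod (Cminus (RtoC 1) (p1 * Cconj p2))).
  { pose proof (Cmod_one_sub_ge (p1 * Cconj p2)). lra. }
  pose proof (Cmod_ge_0 (p1 * Cconj p2)).
  pose proof (Cmod_sub_pos _ _ Hz Hq1). pose proof (Cmod_sub_pos _ _ Hz Hq2).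
  pose proof (Cmod_sub_pos _ _ Hz H1). pose proof (Cmod_sub_pos _ _ Hz H2).
  specialize (Hsym z Hz). unfold dens_f in Hsym.
  rewrite !Cmod_reflect_sub in Hsym by exact Hal.
  apply scaled_inv_prod_inj in Hsym; try (apply pow_lt; assumption); try nra.
  apply Rmult_lt_0_compat.
  - apply Rinv_0_lt_compat. pose proof PI_RGT_0. lra.
  - apply Rdiv_lt_0_compat; nra.
Qed.

Definition first_moment (p1 p2 : C) : C :=
  Cplus (Cmult (RtoC (1 + Cmod p2 ^ 2)) p1) (Cmult (RtoC (1 + Cmod p1 ^ 2)) p2).

Lemma Cmod_unit_coords x y : x ^ 2 + y ^ 2 = 1 -> Cmod (x, y) = 1.
Proof. intro H. unfold Cmod. simpl fst; simpl snd. rewrite H. apply sqrt_1. Qed.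

Lemma Cmod_unit_sub_sqr z q : Cmod z = 1 ->
  Cmod (z - q)%C ^ 2 = 1 + Cmod q ^ 2 - 2 * (fst z * fst q + snd z * snd q).
Proof.
  intro Hz. assert (Hz2 : fst z ^ 2 + snd z ^ 2 = 1) by (rewrite <- Cmod_sqr, Hz; ring).
  rewrite !Cmod_sqr. destruct z, q. simpl in *. lra.
Qed.

(* On the unit circle [|z - p1|^2 |z - p2|^2] is a trigonometric polynomial of
   degree 2 whose first and second Fourier coefficients are [- first_moment p1 p2]
   and [p1 p2]; six sample points determine them. *)
Lemma circle_product_coeffs p1 p2 q1 q2 :
  Cmod q1 = Cmod p1 -> Cmod q2 = Cmod p2 ->
  (forall z, Cmod z = 1 ->
     Cmod (z - q1)%C ^ 2 * Cmod (z - q2)%C ^ 2 = Cmod (z - p1)%C ^ 2 * Cmod (z - p2)%C ^ 2) ->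
  first_moment q1 q2 = first_moment p1 p2 /\ (q1 * q2)%C = (p1 * p2)%C.
Proof.
  intros E1 E2 H.
  assert (Hpt : forall x y, x ^ 2 + y ^ 2 = 1 ->
    (1 + Cmod p1 ^ 2 - 2 * (x * fst q1 + y * snd q1))
    * (1 + Cmod p2 ^ 2 - 2 * (x * fst q2 + y * snd q2))
    = (1 + Cmod p1 ^ 2 - 2 * (x * fst p1 + y * snd p1))
    * (1 + Cmod p2 ^ 2 - 2 * (x * fst p2 + y * snd p2))).
  { intros x y Hxy. pose proof (H (x, y) (Cmod_unit_coords x y Hxy)) as Hz.
    rewrite !Cmod_unit_sub_sqr, E1, E2 in Hz by (apply Cmod_unit_coords; exact Hxy).
    exact Hz. }
  pose proof (Hpt 1 0 ltac:(lra)). pose proof (Hpt (-1) 0 ltac:(lra)).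
  pose proof (Hpt 0 1 ltac:(lra)). pose proof (Hpt 0 (-1) ltac:(lra)).
  pose proof (Hpt (3/5) (4/5) ltac:(lra)). pose proof (Hpt (-3/5) (-4/5) ltac:(lra)).
  unfold first_moment. rewrite E1, E2.
  destruct p1, p2, q1, q2; simpl in *.
  unfold Cplus, Cmult, RtoC; simpl. split; f_equal; lra.
Qed.

Lemma first_moment_reflect al p1 p2 : Cmod al = 1 ->
  first_moment (al * Cconj p1)%C (al * Cconj p2)%C = (al * Cconj (first_moment p1 p2))%C.
Proof.
  intro Hal. unfold first_moment.
  rewrite !Cmod_mult, !Cmod_conj, Hal, !Rmult_1_l.
  rewrite Cplus_conj, !Cmult_conj, !Cconj_RtoC. ring.
Qed.

Lemma Im_sqr_mul_conj_fixed (al u v : C) :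
  u = (al * Cconj u)%C -> v = (al * al * Cconj v)%C -> Im (u * u * Cconj v)%C = 0.
Proof.
  intros Hu Hv.
  assert (E : (u * u * Cconj v)%C = Cconj (u * u * Cconj v)%C).
  { rewrite !Cmult_conj, Cconj_conj.
    rewrite Hv at 2. rewrite Hu at 1 2. ring. }
  destruct (u * u * Cconj v)%C as [x y]. unfold Cconj in E. simpl in *.
  injection E as Ey. lra.
Qed.

Lemma Im_first_moment_sqr p1 p2 :
  Im (first_moment p1 p2 * first_moment p1 p2 * Cconj (p1 * p2))%C
  = Im (p1 * Cconj p2)%C * ((Cmod p1 - Cmod p2) * (1 - Cmod p1 * Cmod p2)
      * ((1 + Cmod p2 ^ 2) * Cmod p1 + (1 + Cmod p1 ^ 2) * Cmod p2)).
Proof.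
  transitivity (Im (p1 * Cconj p2)%C
    * ((1 + Cmod p2 ^ 2) ^ 2 * Cmod p1 ^ 2 - (1 + Cmod p1 ^ 2) ^ 2 * Cmod p2 ^ 2)); [| ring].
  unfold first_moment. rewrite !Cmod_sqr. destruct p1, p2. simpl. ring.
Qed.

Lemma Im_or_Cmod_of_symmetric_density p1 p2 : in_D p1 -> in_D p2 ->
  symmetric_density (dens_f p1 p2) -> Im (p1 * Cconj p2)%C = 0 \/ Cmod p1 = Cmod p2.
Proof.
  intros H1 H2 Hsym. destruct (in_D_Cmod _ H1), (in_D_Cmod _ H2).
  destruct (symmetric_density_reflection _ _ H1 H2 Hsym) as [al [Hal Hid]].
  destruct (circle_product_coeffs p1 p2 (al * Cconj p1) (al * Cconj p2)) as [Eu Ev];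
    [rewrite Cmod_mult, Cmod_conj, Hal; ring .. | exact Hid |].
  rewrite first_moment_reflect in Eu by exact Hal.
  replace (al * Cconj p1 * (al * Cconj p2))%C with (al * al * Cconj (p1 * p2))%C in Ev
    by (rewrite Cmult_conj; ring).
  pose proof (Im_sqr_mul_conj_fixed _ _ _ (eq_sym Eu) (eq_sym Ev)) as W.
  rewrite Im_first_moment_sqr in W.
  apply Rmult_integral in W. destruct W as [W | W]; [left; exact W | right].
  apply Rmult_integral in W. destruct W as [W | W]; [| nra].
  apply Rmult_integral in W. destruct W as [W | W]; nra.
Qed.

Lemma symmetric_density_of_reflection p1 p2 al : Cmod al = 1 ->
  ((al * Cconj p1)%C = p1 /\ (al * Cconj p2)%C = p2) \/
  ((al * Cconj p1)%C = p2 /\ (al * Cconj p2)%C = p1) ->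
  symmetric_density (dens_f p1 p2).
Proof.
  intros Hal H. exists al. split; [exact Hal |]. intros z Hz. unfold dens_f.
  rewrite !Cmod_reflect_sub by exact Hal.
  destruct H as [[E1 E2] | [E1 E2]]; rewrite E1, E2; [reflexivity |].
  assert (Hm : Cmod p1 = Cmod p2) by (rewrite <- E1, Cmod_mult, Cmod_conj, Hal; ring).
  rewrite Hm. ring.
Qed.

Lemma reflection_fixing p q : p <> RtoC 0 -> Im (p * Cconj q)%C = 0 ->
  (p / Cconj p * Cconj q)%C = q.
Proof.
  intros Hp Hq. pose proof (Cconj_neq0 _ Hp).
  replace (p / Cconj p * Cconj q)%C with ((p * Cconj q) / Cconj p)%C by (field; auto).
  rewrite <- (Cconj_Im0 _ Hq), Cmult_conj, Cconj_conj. field. auto.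
Qed.

Lemma Cmod_div_conj p : p <> RtoC 0 -> Cmod (p / Cconj p)%C = 1.
Proof.
  intro Hp. rewrite Cmod_div, Cmod_conj by (apply Cconj_neq0; exact Hp).
  apply Rinv_r. apply Cmod_gt_0 in Hp. lra.
Qed.

Lemma C_eq0_dec (p : C) : {p = RtoC 0} + {p <> RtoC 0}.
Proof.
  destruct (Req_dec_T (Cmod p) 0) as [E | E].
  - left. apply Cmod_eq_0, E.
  - right. intro Z. apply E. rewrite Z. apply Cmod_0.
Qed.

Lemma reflection_fixing_pair p1 p2 : Im (p1 * Cconj p2)%C = 0 ->
  exists al, Cmod al = 1 /\ (al * Cconj p1)%C = p1 /\ (al * Cconj p2)%C = p2.
Proof.
  intro HI. destruct (C_eq0_dec p1) as [Z1 | Z1].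
  - subst p1. destruct (C_eq0_dec p2) as [Z2 | Z2].
    + subst p2. exists (RtoC 1). split; [apply Cmod_1 | split; ring_simplify; apply Cconj_RtoC ].
    + exists (p2 / Cconj p2)%C. split; [apply Cmod_div_conj, Z2 | split].
      * rewrite Cconj_RtoC. ring.
      * apply reflection_fixing; [exact Z2 | apply Im_mul_conj_self].
  - exists (p1 / Cconj p1)%C. split; [apply Cmod_div_conj, Z1 | split].
    + apply reflection_fixing; [exact Z1 | apply Im_mul_conj_self].
    + apply reflection_fixing; assumption.
Qed.

Lemma reflection_swapping_pair p1 p2 : p1 <> RtoC 0 -> Cmod p1 = Cmod p2 ->
  exists al, Cmod al = 1 /\ (al * Cconj p1)%C = p2 /\ (al * Cconj p2)%C = p1.
Proof.
  intros Hp Hm. pose proof (Cconj_neq0 _ Hp).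
  assert (Hn : (p1 * Cconj p1)%C <> RtoC 0) by (apply Cmult_neq_0; assumption).
  assert (E : (p2 * Cconj p2)%C = (p1 * Cconj p1)%C) by (rewrite <- !Cmod2_conj, Hm; reflexivity).
  exists (p1 * p2 / (p1 * Cconj p1))%C. split; [| split].
  - rewrite Cmod_div, !Cmod_mult, Cmod_conj, Hm by exact Hn.
    apply Cmod_gt_0 in Hp. rewrite Hm in Hp. field. lra.
  - field. auto.
  - replace (p1 * p2 / (p1 * Cconj p1) * Cconj p2)%C with (p1 * (p2 * Cconj p2) / (p1 * Cconj p1))%C
      by (field; auto).
    rewrite E. field. auto.
Qed.

Lemma symmetric_density_iff p1 p2 : in_D p1 -> in_D p2 ->
  (symmetric_density (dens_f p1 p2) <-> Im (p1 * Cconj p2)%C = 0 \/ Cmod p1 = Cmod p2).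
Proof.
  intros H1 H2. split; [apply Im_or_Cmod_of_symmetric_density; assumption |].
  assert (Hfix : Im (p1 * Cconj p2)%C = 0 -> symmetric_density (dens_f p1 p2)).
  { intro HI. destruct (reflection_fixing_pair _ _ HI) as [al [Hal E]].
    apply (symmetric_density_of_reflection _ _ al Hal). left. exact E. }
  intros [HI | Hm]; [exact (Hfix HI) |].
  destruct (C_eq0_dec p1) as [Z | Z].
  - apply Hfix. subst p1. rewrite Cmult_0_l. apply im_RtoC.
  - destruct (reflection_swapping_pair _ _ Z Hm) as [al [Hal E]].
    apply (symmetric_density_of_reflection _ _ al Hal). right. exact E.
Qed.

Lemma Cmod_polar r mu : 0 <= r -> Cmod (polar r mu) = r.
Proof.
  intro Hr. unfold Cmod, polar. cbn [fst snd].
  replace ((r * cos mu) ^ 2 + (r * sin mu) ^ 2) with (r ^ 2); [apply sqrt_pow2, Hr |].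
  pose proof (sin2_cos2 mu) as E. unfold Rsqr in E.
  transitivity (r ^ 2 * (sin mu * sin mu + cos mu * cos mu)); [rewrite E |]; ring.
Qed.

Lemma Im_polar_mul_conj r1 r2 mu1 mu2 :
  Im (polar r1 mu1 * Cconj (polar r2 mu2))%C = r1 * r2 * sin (mu1 - mu2).
Proof. rewrite sin_minus. unfold polar. simpl. ring. Qed.

Lemma Cconj_polar r mu : Cconj (polar r mu) = polar r (- mu).
Proof. unfold polar, Cconj. simpl. rewrite cos_neg, sin_neg. f_equal. ring. Qed.

Lemma Cmod_rho_num_bounds p1 p2 : in_D p1 -> in_D p2 ->
  (1 - Cmod p2 ^ 2) * Cmod p1 - (1 - Cmod p1 ^ 2) * Cmod p2 <= Cmod (rho_num p1 p2)
  <= (1 - Cmod p2 ^ 2) * Cmod p1 + (1 - Cmod p1 ^ 2) * Cmod p2.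
Proof.
  intros H1 H2. destruct (in_D_Cmod _ H1), (in_D_Cmod _ H2).
  assert (Hscal : forall k p, 0 <= k -> Cmod (RtoC k * p)%C = k * Cmod p).
  { intros k p Hk. rewrite Cmod_mult, Cmod_R, Rabs_pos_eq; auto. }
  assert (0 <= 1 - Cmod p2 ^ 2) by nra. assert (0 <= 1 - Cmod p1 ^ 2) by nra.
  unfold rho_num. split.
  - pose proof (Cmod_triangle (rho_num p1 p2) (- (RtoC (1 - Cmod p1 ^ 2) * p2))%C) as T.
    unfold rho_num in T.
    replace (RtoC (1 - Cmod p2 ^ 2) * p1 + RtoC (1 - Cmod p1 ^ 2) * p2
             + - (RtoC (1 - Cmod p1 ^ 2) * p2))%C
      with (RtoC (1 - Cmod p2 ^ 2) * p1)%C in T by ring.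
    rewrite Cmod_opp, !Hscal in T by assumption. lra.
  - pose proof (Cmod_triangle (RtoC (1 - Cmod p2 ^ 2) * p1) (RtoC (1 - Cmod p1 ^ 2) * p2)) as T.
    rewrite !Hscal in T by assumption. exact T.
Qed.

Lemma rho_s_lt_1 p1 p2 : in_D p1 -> in_D p2 -> rho_s p1 p2 < 1.
Proof.
  intros H1 H2. destruct (in_D_Cmod _ H1), (in_D_Cmod _ H2).
  destruct (Cmod_rho_num_bounds _ _ H1 H2) as [_ Hub].
  assert (Hm : 0 <= Cmod p1 * Cmod p2 < 1) by (split; nra).
  assert (Hd : 0 < 1 - (Cmod p1 * Cmod p2) ^ 2) by nra.
  assert (0 < (1 - Cmod p1) * (1 - Cmod p2) * (1 - Cmod p1 * Cmod p2))
    by (repeat apply Rmult_lt_0_compat; lra).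
  rewrite rho_s_eq. apply Rlt_div_l; [exact Hd | nra].
Qed.

Lemma rho_s_pos p1 p2 : in_D p1 -> in_D p2 ->
  (1 - Cmod p1 ^ 2) * Cmod p2 < (1 - Cmod p2 ^ 2) * Cmod p1 -> 0 < rho_s p1 p2.
Proof.
  intros H1 H2 H. destruct (in_D_Cmod _ H1), (in_D_Cmod _ H2).
  destruct (Cmod_rho_num_bounds _ _ H1 H2) as [Hlb _].
  assert (Hm : 0 <= Cmod p1 * Cmod p2 < 1) by (split; nra).
  rewrite rho_s_eq. apply Rdiv_lt_0_compat; nra.
Qed.

Lemma one_sub_rho_s_le p1 p2 : in_D p1 -> in_D p2 ->
  1 - rho_s p1 p2 <= (1 - Cmod p1) * (1 + Cmod p2) / (1 - Cmod p1 * Cmod p2).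
Proof.
  intros H1 H2. destruct (in_D_Cmod _ H1), (in_D_Cmod _ H2).
  destruct (Cmod_rho_num_bounds _ _ H1 H2) as [Hlb _].
  assert (Hm : 0 <= Cmod p1 * Cmod p2 < 1) by (split; nra).
  assert (Hd : 0 < 1 - (Cmod p1 * Cmod p2) ^ 2) by nra.
  replace ((1 - Cmod p1) * (1 + Cmod p2) / (1 - Cmod p1 * Cmod p2))
    with (1 - ((1 - Cmod p2 ^ 2) * Cmod p1 - (1 - Cmod p1 ^ 2) * Cmod p2)
              / (1 - (Cmod p1 * Cmod p2) ^ 2)) by (field; nra).
  rewrite rho_s_eq. unfold Rdiv.
  apply Rplus_le_compat_l, Ropp_le_contravar, Rmult_le_compat_r; [| exact Hlb].
  left. apply Rinv_0_lt_compat, Hd.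
Qed.

Lemma Rpower_neg_le x y e : 0 < x <= y -> 0 <= e -> Rpower y (- e) <= Rpower x (- e).
Proof.
  intros Hxy He. rewrite !Rpower_Ropp.
  apply Rinv_le_contravar; [apply exp_pos | apply Rle_Rpower_l; assumption].
Qed.

Lemma mul_Rpower_neg_three_halves t : 0 < t -> t * Rpower t (-3/2) = / sqrt t.
Proof.
  intro Ht. rewrite <- (Rpower_1 t Ht) at 1. rewrite <- Rpower_plus.
  replace (1 + -3/2) with (- / 2) by field. rewrite Rpower_Ropp, Rpower_sqrt; auto.
Qed.

Lemma skew_prefactor_ge (a : C) : Cmod a < 1 ->
  (1 - Cmod a) ^ 2 <= Cmod (Cminus (RtoC 1) a) ^ 2 / (1 - Cmod a ^ 2) ^ 3.
Proof.
  intro Ha. pose proof (Cmod_ge_0 a). pose proof (Cmod_one_sub_ge a).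
  assert (Hd : 0 < (1 - Cmod a ^ 2) ^ 3 <= 1).
  { split; [apply pow_lt; nra |]. rewrite <- (pow1 3). apply pow_incr. nra. }
  assert (1 <= / (1 - Cmod a ^ 2) ^ 3) by (rewrite <- Rinv_1; apply Rinv_le_contravar; lra).
  assert ((1 - Cmod a) ^ 2 <= Cmod (Cminus (RtoC 1) a) ^ 2) by (apply pow_incr; lra).
  unfold Rdiv. nra.
Qed.

Lemma rho_s_polar_bounds r r2 mu1 mu2 : 0 < r2 < 1 -> (3 + r2 ^ 2) / 4 <= r < 1 ->
  0 < rho_s (polar r mu1) (polar r2 mu2) < 1 /\
  1 - rho_s (polar r mu1) (polar r2 mu2) <= (1 + r2) / (1 - r2) * (1 - r).
Proof.
  intros Hr2 Hr.
  assert (D1 : in_D (polar r mu1)) by (unfold in_D; rewrite Cmod_polar; nra).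
  assert (D2 : in_D (polar r2 mu2)) by (unfold in_D; rewrite Cmod_polar; lra).
  split; [split |].
  - apply rho_s_pos; [exact D1 | exact D2 |]. rewrite !Cmod_polar by nra.
    assert ((1 - r) * ((1 + r) * r2) <= (1 - r2 ^ 2) / 4 * 2) by (apply Rmult_le_compat; nra).
    nra.
  - apply rho_s_lt_1; assumption.
  - eapply Rle_trans; [apply one_sub_rho_s_le; assumption |].
    rewrite !Cmod_polar by nra. unfold Rdiv.
    rewrite (Rmult_comm ((1 + r2) * / (1 - r2))), Rmult_assoc.
    apply Rmult_le_compat_l; [lra |].
    apply Rmult_le_compat_l; [lra |]. apply Rinv_le_contravar; nra.
Qed.

(* Every factor is bounded below by a positive constant except
   (1 - rho)^(-3/2) >= (C (1 - r))^(-3/2) and 1 - r^2 >= 1 - r. *)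
Lemma skew_s_polar_lower_bound r2 mu1 mu2 : 0 < r2 < 1 -> 0 < sin (mu1 - mu2) ->
  exists K, 0 < K /\ forall r, (3 + r2 ^ 2) / 4 <= r < 1 ->
    K / sqrt (1 - r) <= skew_s (polar r mu1) (polar r2 mu2).
Proof.
  intros Hr2 HS. set (S := sin (mu1 - mu2)) in *.
  set (C := (1 + r2) / (1 - r2)).
  assert (HC : 0 < C) by (apply Rdiv_lt_0_compat; lra).
  assert (HCe : 0 < Rpower C (-3/2)) by apply exp_pos.
  exists ((1 - r2) ^ 2 * Rpower C (-3/2) * (r2 * S / 2) * ((1 - r2 ^ 2) / 2) * (1 - r2 ^ 2)).
  split; [repeat apply Rmult_lt_0_compat; nra |].
  intros r Hr.
  destruct (rho_s_polar_bounds r r2 mu1 mu2 Hr2 Hr) as [[Hrho0 Hrho1] Hrho].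
  fold C in Hrho.
  assert (Ha : Cmod (polar r mu1 * Cconj (polar r2 mu2)) < 1)
    by (rewrite Cmod_mul_conj, !Cmod_polar; nra).
  assert (HA := skew_prefactor_ge _ Ha).
  unfold skew_s. cbv zeta.
  set (rho := rho_s (polar r mu1) (polar r2 mu2)) in *.
  rewrite Cmod_mul_conj, Im_polar_mul_conj, !Cmod_polar in * by nra. fold S.
  assert (G1 : (1 - r2) ^ 2 <= (1 - r * r2) ^ 2) by (apply pow_incr; nra).
  assert (G2 : 1 <= / rho ^ 2) by (rewrite <- Rinv_1; apply Rinv_le_contravar; nra).
  assert (G3 : Rpower C (-3/2) * Rpower (1 - r) (-3/2) <= Rpower (1 - rho) (-3/2)).
  { rewrite Rpower_mult_distr by lra. replace (-3/2) with (- (3/2)) by field.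
    apply Rpower_neg_le; lra. }
  assert (HRr : 0 < Rpower (1 - r) (-3/2)) by apply exp_pos.
  assert (0 < r2 * S) by nra.
  assert (G4 : r2 * S / 2 <= r * r2 * S) by nra.
  assert (G5 : (1 - r2 ^ 2) / 2 <= r ^ 2 - r2 ^ 2) by nra.
  assert (G6 : 1 - r <= 1 - r ^ 2) by nra.
  assert (Hsq : sqrt (1 - r) = / ((1 - r) * Rpower (1 - r) (-3/2)))
    by (rewrite mul_Rpower_neg_three_halves, Rinv_inv by lra; reflexivity).
  rewrite Hsq.
  replace ((1 - r2) ^ 2 * Rpower C (-3/2) * (r2 * S / 2) * ((1 - r2 ^ 2) / 2) * (1 - r2 ^ 2)
           / / ((1 - r) * Rpower (1 - r) (-3/2)))
    with ((1 - r2) ^ 2 * 1 * (Rpower C (-3/2) * Rpower (1 - r) (-3/2)) * (r2 * S / 2)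
          * ((1 - r2 ^ 2) / 2) * (1 - r) * (1 - r2 ^ 2))
    by (field; split; apply Rgt_not_eq; lra).
  do 6 (apply Rmult_le_compat; [repeat apply Rmult_le_pos; nra | nra | | lra]).
  lra.
Qed.

Lemma at_left_ge (x0 x : R) : x0 < x -> at_left x (fun r => x0 <= r).
Proof.
  intro H. exists (mkposreal (x - x0) ltac:(lra)). intros y Hy _.
  apply Rabs_lt_between' in Hy. simpl in Hy. lra.
Qed.

Lemma inv_sqrt_one_sub_to_p_infty K : 0 < K ->
  filterlim (fun r => K / sqrt (1 - r)) (at_left 1) (Rbar_locally p_infty).
Proof.
  intros HK P [M HM].
  set (b := K / (Rabs M + 1)).
  assert (Hb : 0 < b) by (apply Rdiv_lt_0_compat; [exact HK | pose proof (Rabs_pos M); lra]).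
  exists (mkposreal (b ^ 2) ltac:(apply pow_lt, Hb)). intros y Hy Hy1. apply HM.
  apply Rabs_lt_between' in Hy. simpl in Hy.
  assert (Hs : 0 < sqrt (1 - y) < b).
  { split; [apply sqrt_lt_R0; lra |].
    rewrite <- (sqrt_pow2 b) by lra. apply sqrt_lt_1; lra. }
  assert (E : K / b = Rabs M + 1) by (unfold b; field; pose proof (Rabs_pos M); lra).
  assert (K / b < K / sqrt (1 - y)).
  { unfold Rdiv. apply Rmult_lt_compat_l; [exact HK |]. apply Rinv_lt_contravar; nra. }
  pose proof (Rle_abs M). lra.
Qed.

Lemma skew_s_polar_to_p_infty r2 mu1 mu2 : 0 < r2 < 1 -> sin (mu1 - mu2) > 0 ->
  filterlim (fun r1 => skew_s (polar r1 mu1) (polar r2 mu2)) (at_left 1) (Rbar_locally p_infty).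
Proof.
  intros Hr2 HS.
  destruct (skew_s_polar_lower_bound r2 mu1 mu2 Hr2 HS) as [K [HK Hlb]].
  apply (filterlim_ge_p_infty (fun r => K / sqrt (1 - r))).
  - assert (Hr0 : (3 + r2 ^ 2) / 4 < 1) by nra.
    destruct (at_left_ge _ _ Hr0) as [d Hd].
    exists d. intros y Hy Hy1. apply Hlb. split; [exact (Hd y Hy Hy1) | exact Hy1].
  - apply inv_sqrt_one_sub_to_p_infty, HK.
Qed.

Lemma skew_s_polar_to_m_infty r2 mu1 mu2 : 0 < r2 < 1 -> sin (mu1 - mu2) < 0 ->
  filterlim (fun r1 => skew_s (polar r1 mu1) (polar r2 mu2)) (at_left 1) (Rbar_locally m_infty).
Proof.
  intros Hr2 HS.
  assert (HS' : sin (- mu1 - - mu2) > 0).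
  { replace (- mu1 - - mu2) with (- (mu1 - mu2)) by ring. rewrite sin_neg. lra. }
  apply filterlim_ext with (fun r1 => - skew_s (polar r1 (- mu1)) (polar r2 (- mu2))).
  { intro r. rewrite <- !Cconj_polar, skew_s_conj. ring. }
  eapply filterlim_comp; [apply skew_s_polar_to_p_infty; assumption |].
  apply (filterlim_Rbar_opp p_infty).
Qed.

Theorem theorem5 :
  (forall p1 p2 : C, in_D p1 -> in_D p2 -> p1 <> Copp p2 ->
     (skew_s p1 p2 = 0 <-> symmetric_density (dens_f p1 p2)) /\
     (skew_s p1 p2 > 0 <-> Im (Cmult p1 (Cconj p2)) * (Cmod p1 - Cmod p2) > 0) /\
     (skew_s p1 p2 < 0 <-> Im (Cmult p1 (Cconj p2)) * (Cmod p1 - Cmod p2) < 0) /\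
     (p1 <> RtoC 0 -> p2 <> RtoC 0 ->
        skew_s p1 p2 =
          - skew_s p1 (Cmult (Cmult (Cconj p2) (Cmult p1 p1)) (RtoC (/ (Cmod p1)^2))) /\
        skew_s p1 p2 =
          - skew_s (Cmult (Cmult (Cconj p1) (Cmult p2 p2)) (RtoC (/ (Cmod p2)^2))) p2) /\
     skew_s p2 p1 = skew_s p1 p2 /\
     skew_s (Cconj p1) (Cconj p2) = - skew_s p1 p2 /\
     (forall alpha : C, Cmod alpha = 1 ->
        skew_s (Cmult alpha p1) (Cmult alpha p2) = skew_s p1 p2)) /\
  (forall r2 mu1 mu2 : R, 0 < r2 < 1 ->
     (sin (mu1 - mu2) > 0 ->
        filterlim (fun r1 => skew_s (polar r1 mu1) (polar r2 mu2))
          (at_left 1) (Rbar_locally p_infty)) /\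
     (sin (mu1 - mu2) < 0 ->
        filterlim (fun r1 => skew_s (polar r1 mu1) (polar r2 mu2))
          (at_left 1) (Rbar_locally m_infty))).
Proof.
  split.
  - intros p1 p2 H1 H2 _.
    destruct (skew_s_sign_factor _ _ H1 H2) as [P [HP Hs]].
    split; [| split; [| split; [| split; [| split; [| split]]]]].
    + rewrite symmetric_density_iff, Hs by assumption. split.
      * intro Z. apply Rmult_integral in Z. destruct Z as [Z | Z]; [lra |].
        apply Rmult_integral in Z. destruct Z; [left | right]; lra.
      * intros [Z | Z]; rewrite Z; ring.
    + rewrite Hs. split; intro; nra.
    + rewrite Hs. split; intro; nra.
    + intros Z1 Z2. split.
      * rewrite skew_s_reflect_across by exact Z1. ring.
      * rewrite <- (skew_s_swap (Cconj p1 * (p2 * p2) * RtoC (/ Cmod p2 ^ 2))%C p2).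
        rewrite skew_s_reflect_across, skew_s_swap by exact Z2. ring.
    + apply skew_s_swap.
    + apply skew_s_conj.
    + intros al Hal. apply skew_s_rotate, Hal.
  - intros r2 mu1 mu2 Hr2. split.
    + apply skew_s_polar_to_p_infty, Hr2.
    + apply skew_s_polar_to_m_infty, Hr2.
Qed.
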